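(* Let $\mathcal{D}=\{(X_i,B_i):i\in I\}$ be a collection of random variable/nonempty event pairs with coherent$_1$ conditional previsions $\{P(X_i\mid B_i):i\in I\}$, and let $X$ be a random variable on $\Omega$. Then there exist extended real numbers $a\le b$ such that, for an extended real number $p$, the previsions in $\mathcal{D}$ together with $P(X\mid\Omega)=p$ are coherent$_1$ if and only if $p\in[a,b]$ (the closed interval in the extended reals).
   Context: Let $\Omega$ be a nonempty set of states $\omega$; events are subsets of $\Omega$ and random variables are real-valued functions on $\Omega$. An event $B$ is identified with its indicator function. A conditional prevision $P(X\mid B)$ is an extended real number. Coherence$_1$: a collection $\{P(X_i\mid B_i):i\in I\}$ is coherent$_1$ if for every finite $\{i_1,\dots,i_n\}\subseteq I$, all real $\alpha_1,\dots,\alpha_n$ with $\alpha_j\ge 0$ whenever $P(X_{i_j}\mid B_{i_j})=+\infty$ and $\alpha_j\le 0$ whenever $P(X_{i_j}\mid B_{i_j})=-\infty$, and all real $c_1,\dots,c_n$ with $c_j=P(X_{i_j}\mid B_{i_j})$ whenever that prevision is finite, we have $\sup_\omega \sum_{j=1}^n \alpha_j B_{i_j}(\omega)[X_{i_j}(\omega)-c_j]\ge 0$. *)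

From HB Require Import structures.
From mathcomp Require Import all_boot all_order all_algebra.
From mathcomp Require Import all_classical all_reals ereal numfun.
Set Implicit Arguments. Unset Strict Implicit. Unset Printing Implicit Defensive.
Import Order.TTheory GRing.Theory Num.Theory.
Local Open Scope classical_set_scope.
Local Open Scope ring_scope.

(* A finite subfamily {i_1,...,i_n} of
   distinct indices is given by an injective map idx : 'I_n -> I. *)
Definition coherent1 (R : realType) (Omega : Type) (I : Type)
  (X : I -> Omega -> R) (B : I -> set Omega) (P : I -> \bar R) : Prop :=
  forall (n : nat) (idx : 'I_n -> I), injective idx ->
  forall (alpha c : 'I_n -> R),
    (forall j, P (idx j) = +oo%E -> 0 <= alpha j) ->
    (forall j, P (idx j) = -oo%E -> alpha j <= 0) ->
    (forall j (r : R), P (idx j) = r%:E -> c j = r) ->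
    (0 <= ereal_sup (range (fun w : Omega =>
        (\sum_(j < n) alpha j * \1_(B (idx j)) w * (X (idx j) w - c j))%:E)))%E.

(* The family D extended by the pair (Y, Omega) with prevision p,
   indexed by option I (None is the new pair). *)
Definition extX (R : realType) (Omega I : Type) (X : I -> Omega -> R)
  (Y : Omega -> R) : option I -> Omega -> R :=
  fun o => match o with Some i => X i | None => Y end.
Definition extB (Omega I : Type) (B : I -> set Omega) : option I -> set Omega :=
  fun o => match o with Some i => B i | None => setT end.
Definition extP (R : realType) (I : Type) (P : I -> \bar R) (p : \bar R)
  : option I -> \bar R :=
  fun o => match o with Some i => P i | None => p end.

From HB Require Import structures.
From mathcomp Require Import all_boot all_order all_algebra.
From mathcomp Require Import all_classical all_reals ereal numfun.
From mathcomp Require Import ring lra.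
Import Order.TTheory GRing.Theory Num.Theory.
Local Open Scope classical_set_scope.
Local Open Scope ring_scope.

Set Implicit Arguments. Unset Strict Implicit.

(* A bet [(i, a, c)] pays [a (X_i - c)] on [B_i]; it is admissible when [c]
   is the prevision of [X_i] if that is finite and [a] has the sign forced by
   an infinite prevision.  Admissible bets on one index merge into a single
   admissible bet, so coherence says exactly that every finite list [s] of
   admissible bets, repetitions allowed, has a gain with nonnegative supremum.
   Let [U Z] be the infimum over such [s] of [sup (gain s + Z)].  A bet on [Y]
   with positive stake is harmless iff [p <= U Y], one with negative stake iff
   [- p <= U (- Y)], and all bets on [Y] merge into one; so the admissible
   values of [p] form the interval [[- U (- Y), U Y]], which is nonempty since
   the gain of a concatenation of two lists is the sum of their gains. *)

Section SupRange.
Variables (R : realType) (Omega : Type).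

Definition sup_nonneg (f : Omega -> R) : Prop :=
  (0 <= ereal_sup (range (fun w => (f w)%:E)))%E.

Lemma ereal_sup_range_geP (f : Omega -> R) (x : R) :
  (x%:E <= ereal_sup (range (fun w => (f w)%:E)))%E <->
  (forall e, 0 < e -> exists w, x - e < f w).
Proof.
split=> [Hx e e0|Hx].
- have : ((x - e)%:E < ereal_sup (range (fun w => (f w)%:E)))%E.
    by apply: lt_le_trans Hx; rewrite lte_fin ltrBlDr ltrDl.
  by move=> /ereal_sup_gt [_ [w _ <-]]; rewrite lte_fin; exists w.
- apply/lee_addgt0Pr => e e0; have [w fw] := Hx e e0.
  apply: (@le_trans _ _ ((f w)%:E + e%:E)%E).
    by rewrite -EFinD lee_fin -lerBlDr ltW.
  by apply: leeD2r; apply: ereal_sup_ubound; exists w.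
Qed.

Lemma sup_nonnegP (f : Omega -> R) :
  sup_nonneg f <-> (forall e, 0 < e -> exists w, - e < f w).
Proof.
rewrite /sup_nonneg ereal_sup_range_geP.
by split=> Hf e e0; have [w fw] := Hf e e0; exists w; rewrite sub0r in fw *.
Qed.

Lemma eq_sup_nonneg (f g : Omega -> R) : f =1 g -> sup_nonneg f -> sup_nonneg g.
Proof. by move=> /funext ->. Qed.

Lemma oppe_ereal_sup_le (f g : Omega -> R) : sup_nonneg (f \+ g) ->
  (- ereal_sup (range (fun w => (f w)%:E)) <=
   ereal_sup (range (fun w => (g w)%:E)))%E.
Proof.
move=> /sup_nonnegP fg.
have [w0 _] := fg 1 ltr01.
have g_le w : ((g w)%:E <= ereal_sup (range (fun w => (g w)%:E)))%E.
  by apply: ereal_sup_ubound; exists w.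
case: (ereal_sup _) g_le => [y| |] g_le; last by have := g_le w0.
- rewrite leeNl -EFinN; apply/ereal_sup_range_geP => e e0.
  have [w /= fgw] := fg e e0; exists w.
  by have := g_le w; rewrite lee_fin /=; lra.
- exact: leey.
Qed.

End SupRange.

Lemma big_undup_partition (V : nmodType) (A K : eqType)
    (key : A -> K) (s : seq A) (F : A -> V) :
  \sum_(t <- s) F t =
  \sum_(k <- undup (map key s)) \sum_(t <- s | key t == k) F t.
Proof.
rewrite (exchange_big_dep xpredT) //= [LHS]big_seq [RHS]big_seq.
apply: eq_bigr => t st; rewrite -big_filter.
under eq_filter do rewrite eq_sym.
by rewrite filter_pred1_uniq ?undup_uniq ?big_seq1 // mem_undup map_f.
Qed.

Lemma psumr_seq_eq0P (V : numDomainType) (A : eqType) (s : seq A) (F : A -> V) :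
  {in s, forall x, 0 <= F x} -> \sum_(x <- s) F x = 0 ->
  {in s, forall x, F x = 0}.
Proof.
move=> F_ge0 /eqP; rewrite big_seq psumr_eq0 // => /allP F0 x xs.
by apply/eqP; have /implyP := F0 x xs; apply.
Qed.

Section MergedBets.
Variable R : realType.

Definition admissible_bet (q : \bar R) (a c : R) : Prop :=
  [/\ q = +oo%E -> 0 <= a, q = -oo%E -> a <= 0 & forall r, q = r%:E -> c = r].

Lemma admissible_betN (q : \bar R) (a c : R) :
  admissible_bet q a c -> admissible_bet (- q) (- a) (- c).
Proof.
move=> [qy qNy qr]; split.
- by move=> /eqP; rewrite eqe_oppLR => /eqP/qNy; rewrite oppr_ge0.
- by move=> /eqP; rewrite eqe_oppLR => /eqP/qy; rewrite oppr_le0.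
- by move=> r /eqP; rewrite eqe_oppLR -EFinN => /eqP/qr ->; rewrite opprK.
Qed.

Lemma price_le_of_admissible_bet (q b : \bar R) (a c : R) :
  admissible_bet q a c -> 0 < a -> (q <= b)%E -> (c%:E <= b)%E.
Proof.
case: q => [r| |] [_ qNy qr] a_gt0.
- by rewrite (qr r).
- by rewrite leye_eq => /eqP ->; apply: leey.
- by have := qNy erefl; rewrite leNgt a_gt0.
Qed.

(* Under an infinite prevision the stakes share one sign, so a zero total stake
   means all stakes vanish and any price will do; otherwise the stake-weighted
   mean price makes the merged bet pay what the bets of [L] pay together. *)
Definition merged_price (q : \bar R) (L : seq (R * R)) : R :=
  if q is r%:E then r else
  let A := \sum_(x <- L) x.1 in
  if A == 0 then 0 else (\sum_(x <- L) x.1 * x.2) / A.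

Variables (q : \bar R) (L : seq (R * R)).
Hypothesis L_adm : {in L, forall x, admissible_bet q x.1 x.2}.

Lemma merged_priceE :
  (\sum_(x <- L) x.1) * merged_price q L = \sum_(x <- L) x.1 * x.2.
Proof.
rewrite /merged_price; case: q L_adm => [r| |] adm.
- rewrite mulr_suml [RHS]big_seq [LHS]big_seq.
  by apply: eq_bigr => x xL; have [_ _ /(_ r erefl) ->] := adm x xL.
all: case: eqP => [A0|/eqP A0]; last by rewrite mulrC divfK.
all: rewrite mulr0 big_seq big1 // => x xL.
- rewrite (psumr_seq_eq0P _ A0) ?mul0r // => y yL.
  by have [+ _ _] := adm y yL; apply.
- suff : - x.1 = 0 by move/eqP; rewrite oppr_eq0 => /eqP ->; rewrite mul0r.
  apply: (psumr_seq_eq0P (s := L) (F := fun x => - x.1)) => //.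
    by move=> y yL; rewrite oppr_ge0; have [_ + _] := adm y yL; apply.
  by rewrite sumrN A0 oppr0.
Qed.

Lemma admissible_merged : admissible_bet q (\sum_(x <- L) x.1) (merged_price q L).
Proof.
split=> [qy|qNy|r qr]; last by rewrite /merged_price qr.
- by rewrite big_seq sumr_ge0 // => x /L_adm[+ _ _]; apply.
- by rewrite big_seq sumr_le0 // => x /L_adm[_ + _]; apply.
Qed.

End MergedBets.

Section Gains.
Variables (R : realType) (Omega : Type) (T : eqType).
Variables (X : T -> Omega -> R) (B : T -> set Omega) (P : T -> \bar R).

Definition bet_gain (t : T * R * R) (w : Omega) : R :=
  t.1.2 * \1_(B t.1.1) w * (X t.1.1 w - t.2).

Definition gain (s : seq (T * R * R)) (w : Omega) : R :=
  \sum_(t <- s) bet_gain t w.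

Lemma gain_cat s1 s2 w : gain (s1 ++ s2) w = gain s1 w + gain s2 w.
Proof. exact: big_cat. Qed.

Definition admissible (s : seq (T * R * R)) : Prop :=
  {in s, forall t, admissible_bet (P t.1.1) t.1.2 t.2}.

Definition bets_at (s : seq (T * R * R)) (i : T) : seq (R * R) :=
  [seq (t.1.2, t.2) | t <- s & t.1.1 == i].

Lemma admissible_bets_at s i : admissible s ->
  {in bets_at s i, forall x, admissible_bet (P i) x.1 x.2}.
Proof.
move=> adm x /mapP[t]; rewrite mem_filter => /andP[/eqP <- ts] ->.
exact: adm.
Qed.

Lemma gain_at s i w : admissible s ->
  \sum_(t <- s | t.1.1 == i) bet_gain t w =
  (\sum_(x <- bets_at s i) x.1) * \1_(B i) w *
  (X i w - merged_price (P i) (bets_at s i)).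
Proof.
move=> /(admissible_bets_at (i := i))/merged_priceE merged.
set S := \sum_(x <- _) x.1; set m := merged_price _ _.
have -> : S * \1_(B i) w * (X i w - m) =
    \1_(B i) w * (S * X i w) - \1_(B i) w * (S * m) by ring.
rewrite merged /S !big_map !big_filter.
rewrite mulr_suml !mulr_sumr -sumrB; apply: eq_bigr => t /eqP ti.
by rewrite /bet_gain ti /=; ring.
Qed.

Lemma coherent1_gain :
  coherent1 X B P -> forall s, admissible s -> sup_nonneg (gain s).
Proof.
move=> coh s adm; pose u := undup (map (fun t => t.1.1) s).
pose idx := tnth (in_tuple u).
pose stake i := \sum_(x <- bets_at s i) x.1.
pose price i := merged_price (P i) (bets_at s i).
have idx_inj : injective idx by apply/tuple_uniqP; exact: undup_uniq.
have := coh _ idx idx_inj (stake \o idx) (price \o idx).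
have merged j := admissible_merged (admissible_bets_at (i := idx j) adm).
have gainE w : \sum_(j < size u) (stake \o idx) j * \1_(B (idx j)) w *
    (X (idx j) w - (price \o idx) j) = gain s w.
  rewrite /gain (big_undup_partition (fun t => t.1.1)) -/u (big_tnth _ _ u) /=.
  by apply: eq_bigr => j _; rewrite gain_at.
move=> nonneg; apply: (eq_sup_nonneg gainE); apply: nonneg => j.
- by have [+ _ _] := merged j.
- by have [_ + _] := merged j.
- by have [_ _ +] := merged j.
Qed.

End Gains.

Section Extension.
Variables (R : realType) (Omega : Type) (I : eqType).
Variables (X : I -> Omega -> R) (B : I -> set Omega) (P : I -> \bar R).
Implicit Types (Z : Omega -> R) (p : \bar R) (s : seq (I * R * R)).

Definition upper_prevision Z : \bar R :=
  ereal_inf [set ereal_sup (range (fun w => (gain X B s w + Z w)%:E)) |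
             s in admissible P].

Lemma le_upper_prevision Z p :
  (forall c s, admissible_bet p 1 c -> admissible P s ->
     sup_nonneg (fun w => gain X B s w + (Z w - c))) ->
  (p <= upper_prevision Z)%E.
Proof.
move=> bets; apply: le_ereal_inf_tmp => _ [s adm <-].
have price_le c : admissible_bet p 1 c ->
    (c%:E <= ereal_sup (range (fun w => (gain X B s w + Z w)%:E)))%E.
  move=> /bets/(_ adm)/sup_nonnegP nonneg; apply/ereal_sup_range_geP => e e0.
  by have [w gw] := nonneg e e0; exists w; lra.
case: p bets price_le => [r| |] _ price_le.
- by apply: price_le; split=> // r0 [->].
- rewrite leye_eq; apply/eqP/eq_infty => M.
  by apply: price_le; split=> // _; apply: ler01.
- exact: leNye.
Qed.

Lemma upper_prevision_ge Z r s A :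
  (r%:E <= upper_prevision Z)%E -> admissible P s -> 0 < A ->
  sup_nonneg (fun w => gain X B s w + A * (Z w - r)).
Proof.
move=> r_le adm A_gt0.
have A_neq0 : A != 0 by rewrite gt_eqF.
pose s' := [seq (t.1.1, t.1.2 / A, t.2) | t <- s].
have adm' : admissible P s'.
  move=> _ /mapP[t /adm[ty tNy tr] ->]; split=> //= [/ty|/tNy] ?.
    by rewrite divr_ge0 // ltW.
  by rewrite ler_pdivrMr // mul0r.
have gain' w : gain X B s' w = gain X B s w / A.
  rewrite /gain big_map mulr_suml; apply: eq_bigr => t _.
  by rewrite /bet_gain /=; field.
have : (r%:E <= ereal_sup (range (fun w => (gain X B s' w + Z w)%:E)))%E.
  by apply: le_trans r_le _; apply: ereal_inf_lbound; exists s'.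
move=> /ereal_sup_range_geP sup_ge; apply/sup_nonnegP => e e0.
have [w gw] := sup_ge (e / A) (divr_gt0 e0 A_gt0); exists w.
have eA : A * (e / A) = e by field.
have gA : A * (gain X B s w / A) = gain X B s w by field.
by move: gw; rewrite gain' -(ltr_pM2l A_gt0) !mulrDr mulrN eA gA; lra.
Qed.

Variable Y : Omega -> R.

Lemma coherent1_ext_gain p a c s :
  coherent1 (extX X Y) (extB B) (extP P p) -> admissible P s ->
  admissible_bet p a c -> sup_nonneg (fun w => gain X B s w + a * (Y w - c)).
Proof.
move=> coh adm bet.
pose s' := [seq (Some t.1.1, t.1.2, t.2) | t <- s] ++ [:: (None, a, c)].
have adm' : admissible (extP P p) s'.
  move=> t; rewrite mem_cat => /orP[/mapP[t' /adm ? ->] //|].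
  by rewrite inE => /eqP ->.
apply: eq_sup_nonneg (coherent1_gain coh adm') => w.
by rewrite gain_cat /gain big_map big_seq1 /bet_gain /= indicT mulr1.
Qed.

Lemma coherent1_ext_le_upper p :
  coherent1 (extX X Y) (extB B) (extP P p) -> (p <= upper_prevision Y)%E.
Proof.
move=> coh; apply: le_upper_prevision => c s bet adm.
by apply: eq_sup_nonneg (coherent1_ext_gain coh adm bet) => w; rewrite mul1r.
Qed.

Lemma coherent1_ext_ge_lower p :
  coherent1 (extX X Y) (extB B) (extP P p) ->
  (- upper_prevision (fun w => (- Y w)%R) <= p)%E.
Proof.
move=> coh; rewrite leeNl; apply: le_upper_prevision => c s bet adm.
have := admissible_betN bet; rewrite oppeK => bet'.
by apply: eq_sup_nonneg (coherent1_ext_gain coh adm bet') => w; lra.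
Qed.

Lemma lower_le_upper : coherent1 X B P ->
  (- upper_prevision (fun w => (- Y w)%R) <= upper_prevision Y)%E.
Proof.
move=> coh; rewrite leeNl; apply: le_ereal_inf_tmp => _ [s2 adm2 <-].
rewrite leeNl; apply: le_ereal_inf_tmp => _ [s1 adm1 <-].
apply: oppe_ereal_sup_le.
have adm12 : admissible P (s1 ++ s2).
  by move=> t; rewrite mem_cat => /orP[/adm1|/adm2].
by apply: eq_sup_nonneg (coherent1_gain coh adm12) => w; rewrite gain_cat /=; lra.
Qed.

Definition proper_bets (s : seq (option I * R * R)) : seq (I * R * R) :=
  pmap (fun t => if t.1.1 is Some i then Some (i, t.1.2, t.2) else None) s.

Lemma admissible_proper_bets p (s : seq (option I * R * R)) :
  admissible (extP P p) s -> admissible P (proper_bets s).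
Proof.
move=> adm t; rewrite mem_pmap => /mapP[[[[i|] a] c] ts] //= [->].
exact: adm ts.
Qed.

Lemma gain_ext (s : seq (option I * R * R)) w :
  gain (extX X Y) (extB B) s w = gain X B (proper_bets s) w +
    \sum_(t <- s | t.1.1 == None) bet_gain (extX X Y) (extB B) t w.
Proof.
elim: s => [|[[[i|] a] c] s IH]; first by rewrite /gain !big_nil addr0.
- by rewrite /gain !big_cons -/(gain _ _ _ w) IH /= addrA.
- by rewrite /gain !big_cons -!/(gain _ _ _ w) IH /= addrCA.
Qed.

Lemma coherent1_ext_of_bounds p :
  coherent1 X B P ->
  (- upper_prevision (fun w => (- Y w)%R) <= p <= upper_prevision Y)%E ->
  coherent1 (extX X Y) (extB B) (extP P p).
Proof.
move=> coh /andP[lo_p p_up] n idx _ alpha c alpha_ge0 alpha_le0 c_eq.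
pose s := [seq (idx j, alpha j, c j) | j <- index_enum 'I_n].
have adm : admissible (extP P p) s.
  move=> _ /mapP[j _ ->].
  by split=> /=; [apply: alpha_ge0|apply: alpha_le0|apply: c_eq].
pose A := \sum_(x <- bets_at s None) x.1.
pose m := merged_price p (bets_at s None).
have bet : admissible_bet p A m :=
  admissible_merged (admissible_bets_at (i := None) adm).
have adm' := admissible_proper_bets adm.
suff : sup_nonneg (fun w => gain X B (proper_bets s) w + A * (Y w - m)).
  apply: eq_sup_nonneg => w.
  have -> : \sum_(j < n) alpha j * \1_(extB B (idx j)) w *
      (extX X Y (idx j) w - c j) = gain (extX X Y) (extB B) s w.
    by rewrite /gain big_map.
  by rewrite gain_ext (gain_at _ _ _ _ adm) indicT mulr1.
have [A_lt0|A_gt0|A0] := ltgtP A 0.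
- have m_le : ((- m)%:E <= upper_prevision (fun w => (- Y w)%R))%E.
    by apply: price_le_of_admissible_bet (admissible_betN bet) _ _;
      rewrite ?oppr_gt0 // -leeNl.
  have negA_gt0 : 0 < - A by rewrite oppr_gt0.
  have := upper_prevision_ge m_le adm' negA_gt0.
  by apply: eq_sup_nonneg => w; lra.
- exact: upper_prevision_ge (price_le_of_admissible_bet bet A_gt0 p_up) adm' A_gt0.
- by apply: eq_sup_nonneg (coherent1_gain coh adm') => w; rewrite A0 mul0r addr0.
Qed.

End Extension.

Theorem lemma7p1 (R : realType) (Omega : Type) (I : Type)
  (X : I -> Omega -> R) (B : I -> set Omega) (P : I -> \bar R)
  (Y : Omega -> R) :
  (exists w : Omega, True) ->
  (forall i, B i !=set0) ->
  coherent1 X B P ->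
  exists a b : \bar R, (a <= b)%E /\
    forall p : \bar R,
      coherent1 (extX X Y) (extB B) (extP P p) <-> (a <= p <= b)%E.
Proof.
move=> _ _ coh; pose upper := upper_prevision (I := {classic I}) X B P.
exists (- upper (fun w => (- Y w)%R))%E, (upper Y); split.
  exact: lower_le_upper.
move=> p; split=> [coh_p|]; last exact: coherent1_ext_of_bounds.
by rewrite coherent1_ext_ge_lower ?coherent1_ext_le_upper.
Qed.
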